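(* Let $N\geq 1$ be an integer. Then for all $0<x<\pi/2$, \[ 2+\sum_{k=1}^{N-1}\frac{k\cdot 2^{2k+3}|B_{2k+2}|}{(2k+2)!}x^{2k+2}+p_N x^{2N+1}\tan x<\left(\frac{x}{\sin x}\right)^2+\frac{x}{\tan x}<2+\sum_{k=1}^{N-1}\frac{k\cdot 2^{2k+3}|B_{2k+2}|}{(2k+2)!}x^{2k+2}+q_N x^{2N+1}\tan x, \] with the best possible constants $p_N=0$ and $q_N=\dfrac{N\cdot 2^{2N+3}|B_{2N+2}|}{(2N+2)!}$.
   Context: The Bernoulli numbers $B_n$ are defined by $\frac{t}{e^t-1}=\sum_{n=0}^\infty B_n\frac{t^n}{n!}$ for $|t|<2\pi$. An empty sum is understood to be zero. *)

From Stdlib Require Import Arith Reals Lra Lia.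
Open Scope R_scope.

(* The generating-function definition of the Bernoulli numbers:
   t/(e^t-1) = sum_{n>=0} B_n t^n/n!  for 0<|t|<2*pi
   (t = 0 is excluded since the left side is defined there only by continuity;
   this still determines B uniquely). *)
Definition is_Bernoulli (B : nat -> R) : Prop :=
  forall t : R, 0 < Rabs t < 2 * PI ->
    infinite_sum (fun n => B n * t ^ n / INR (fact n)) (t / (exp t - 1)).

Fixpoint sumR (f : nat -> R) (n : nat) : R :=
  match n with
  | O => 0
  | S m => sumR f m + f m
  end.

Definition coef (B : nat -> R) (k : nat) : R :=
  INR k * 2 ^ (2 * k + 3)%nat * Rabs (B (2 * k + 2)%nat) / INR (fact (2 * k + 2)%nat).

Definition approx8 (B : nat -> R) (N : nat) (c x : R) : R :=
  2 + sumR (fun j => coef B (S j) * x ^ (2 * S j + 2)%nat) (N - 1)%nat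
    + c * x ^ (2 * N + 1)%nat * tan x.

Definition middle (x : R) : R := (x / sin x) ^ 2 + x / tan x.

From Stdlib Require Import Arith Reals Lra Lia Psatz.
From Coquelicot Require Import Coquelicot.
Open Scope R_scope.

(* Put [y = x^2] and [G(y) = sum_k g_k y^k] with [g_k = (-4)^k B_(2k) / (2k)!], so that
   [G(x^2) = x cot x].  Then [(x / sin x)^2 + x / tan x = x^2 + G^2 + G = 2 G - 2 y G'] by the
   Riccati equation [2 y G' = G - G^2 - y], and the coefficient [2 (1 - k) g_k] of [y^k] is the
   constant attached to [x^(2k)] in the statement.  The Riccati recursion for the [g_k] gives
   [-g_k > 0] and [-g_(k+1) <= -g_k / 6], so the tail of the series after [x^(2N)] lies between
   its first term [q_N x^(2N+2)] and [q_N x^(2N+2) / (1 - x^2/3)]; together with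
   [tan x > x / (1 - x^2/3)] this gives both inequalities, and letting [x -> pi/2] resp.
   [x -> 0] shows that [p_N] and [q_N] cannot be improved.  The identity [G(x^2) = x cot x]
   is itself obtained from the Riccati equation by a uniqueness argument. *)

Lemma CV_radius_gt_of_ex_pseries (a : nat -> R) (r : R) :
  (forall x, 0 < x < r -> ex_pseries a x) ->
  forall x, Rabs x < r -> Rbar_lt (Rabs x) (CV_radius a).
Proof.
  intros Hex x Hx.
  set (y := (Rabs x + r) / 2).
  assert (Hy : 0 < y < r) by (pose proof (Rabs_pos x); unfold y; lra).
  pose proof (ex_series_lim_0 _ (proj1 (ex_pseries_R a y) (Hex y Hy))) as Hlim.
  destruct (filterlim_bounded _ (ex_intro _ 0 Hlim)) as [M HM].
  assert (Hle : Rbar_le y (CV_radius a)).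
  { apply (proj1 (CV_radius_bounded a)). now exists M. }
  destruct (CV_radius a) as [c| |]; simpl in *; try easy.
  unfold y in Hle; lra.
Qed.

Lemma CV_radius_gt_of_geom_bound (a : nat -> R) (c r : R) :
  0 < r -> (forall n, Rabs (a n) * r ^ n <= c) ->
  forall x, Rabs x < r -> Rbar_lt (Rabs x) (CV_radius a).
Proof.
  intros Hr Hb x Hx.
  assert (Hle : Rbar_le r (CV_radius a)).
  { apply (proj1 (CV_radius_bounded a)). exists c. intros n.
    rewrite Rabs_mult, <- RPow_abs, (Rabs_pos_eq r) by lra. apply Hb. }
  destruct (CV_radius a) as [l| |]; simpl in *; try easy. lra.
Qed.

Lemma PSeries_coef_0_of_bound (a : nat -> R) (f : R -> R) (e L : R) :
  0 < e -> Rbar_lt 0 (CV_radius a) ->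
  (forall x, 0 < x < e -> PSeries a x = f x) ->
  (forall x, 0 < x < e -> Rabs (f x - L) <= x) -> a 0%nat = L.
Proof.
  intros He Hr Hf Hb.
  assert (Hc : continuity_pt (PSeries a) 0).
  { apply PSeries_continuity. now rewrite Rabs_R0. }
  rewrite <- (PSeries_0 a).
  apply Rminus_diag_uniq, Rabs_eq_0, Rle_antisym; [|apply Rabs_pos].
  apply le_epsilon. intros eps Heps.
  destruct (Hc (eps / 2) ltac:(lra)) as [alp [Halp Hd]].
  set (x := Rmin (Rmin alp eps) e / 2).
  assert (Hm1 := Rmin_l (Rmin alp eps) e). assert (Hm2 := Rmin_r (Rmin alp eps) e).
  assert (Hm3 := Rmin_l alp eps). assert (Hm4 := Rmin_r alp eps).
  assert (Hx0 : 0 < x).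
  { unfold x. pose proof (Rmin_glb_lt _ _ 0 (Rmin_glb_lt alp eps 0 Halp Heps) He). lra. }
  assert (Hx : 0 < x < e) by (split; [exact Hx0 | unfold x in *; lra]).
  assert (Hxa : x < alp) by (unfold x in *; lra).
  assert (Hxe : x <= eps / 2) by (unfold x in *; lra).
  assert (Hnear : Rabs (PSeries a x - PSeries a 0) < eps / 2).
  { specialize (Hd x). simpl in Hd. unfold R_dist in Hd.
    apply Hd. split; [split; [exact I | lra]|].
    rewrite Rminus_0_r, Rabs_pos_eq; lra. }
  rewrite (Hf x Hx) in Hnear. specialize (Hb x Hx).
  apply Rabs_def2 in Hnear. apply Rabs_le. apply Rabs_le_between in Hb. lra.
Qed.

Lemma PSeries_coef_eq_0 (a : nat -> R) (e : R) :
  0 < e -> (forall x, Rabs x < e -> ex_pseries a x) ->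
  (forall x, 0 < Rabs x < e -> PSeries a x = 0) -> forall n, a n = 0.
Proof.
  intros He Hex H n.
  assert (Hr0 : Rbar_lt 0 (CV_radius a)).
  { rewrite <- Rabs_R0. apply (CV_radius_gt_of_ex_pseries a e); [|rewrite Rabs_R0; lra].
    intros x Hx. apply Hex. rewrite Rabs_pos_eq; lra. }
  assert (H0 : PSeries a 0 = 0).
  { rewrite PSeries_0. apply (PSeries_coef_0_of_bound a (fun _ => 0) e); auto.
    - intros x Hx. apply H. rewrite Rabs_pos_eq; lra.
    - intros x Hx. rewrite Rminus_0_r, Rabs_R0. lra. }
  apply (PSeries_ext_recip a (fun _ => 0) n Hr0).
  - rewrite CV_radius_const_0. exact I.
  - exists (mkposreal e He). intros y Hy. rewrite PSeries_const_0.
    destruct (Req_dec y 0) as [->|Hy0]; [exact H0|].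
    apply H. split; [now apply Rabs_pos_lt|].
    unfold ball in Hy; simpl in Hy. unfold AbsRing_ball, abs, minus, plus, opp in Hy; simpl in Hy.
    now rewrite Ropp_0, Rplus_0_r in Hy.
Qed.

Definition PS_one (n : nat) : R := match n with O => 1 | _ => 0 end.

Definition PS_id : nat -> R := PS_incr_1 PS_one.

Lemma ex_pseries_one (x : R) : ex_pseries PS_one x.
Proof.
  apply ex_series_incr_1.
  eapply ex_series_ext; [|apply (CV_radius_inside (fun _ => 0) x)].
  - intros n. unfold scal, mult; simpl. unfold mult; simpl. ring.
  - now rewrite CV_radius_const_0.
Qed.

Lemma PSeries_one (x : R) : PSeries PS_one x = 1.
Proof.
  rewrite PSeries_decr_1 by apply ex_pseries_one. simpl.
  rewrite (PSeries_ext _ (fun _ => 0)) by reflexivity.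
  rewrite PSeries_const_0. ring.
Qed.

Lemma ex_pseries_id (x : R) : ex_pseries PS_id x.
Proof. apply ex_pseries_incr_1, ex_pseries_one. Qed.

Lemma PSeries_id (x : R) : PSeries PS_id x = x.
Proof. unfold PS_id. rewrite PSeries_incr_1, PSeries_one. ring. Qed.

Lemma pow_opp (t : R) (n : nat) : (- t) ^ n = (-1) ^ n * t ^ n.
Proof. rewrite <- Rpow_mult_distr. f_equal. ring. Qed.

Lemma PSeries_alt (a : nat -> R) (t : R) :
  PSeries (fun n => (-1) ^ n * a n) t = PSeries a (- t).
Proof. unfold PSeries. apply Series_ext. intros n. rewrite pow_opp. ring. Qed.

Lemma ex_pseries_alt (a : nat -> R) (t : R) :
  ex_pseries a (- t) -> ex_pseries (fun n => (-1) ^ n * a n) t.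
Proof.
  apply ex_series_ext. intros n. rewrite !pow_n_pow, pow_opp.
  change ((-1) ^ n * t ^ n * a n = t ^ n * ((-1) ^ n * a n)). ring.
Qed.

Definition PS_xderive (a : nat -> R) (n : nat) : R := INR n * a n.

Lemma PS_xderive_incr_1 (a : nat -> R) (n : nat) :
  PS_xderive a n = PS_incr_1 (PS_derive a) n.
Proof. destruct n; unfold PS_xderive, PS_derive; simpl; [apply Rmult_0_l | reflexivity]. Qed.

Lemma PSeries_xderive (a : nat -> R) (x : R) :
  PSeries (PS_xderive a) x = x * PSeries (PS_derive a) x.
Proof. rewrite (PSeries_ext _ _ x (PS_xderive_incr_1 a)). apply PSeries_incr_1. Qed.

Lemma ex_pseries_xderive (a : nat -> R) (x : R) :
  Rbar_lt (Rabs x) (CV_radius a) -> ex_pseries (PS_xderive a) x.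
Proof.
  intros H. eapply ex_pseries_ext; [intros n; symmetry; apply PS_xderive_incr_1|].
  apply ex_pseries_incr_1, ex_pseries_derive, H.
Qed.

Lemma Series_geom_bounds (a : nat -> R) (c r : R) :
  0 <= r < 1 -> (forall n, 0 <= a n <= c * r ^ n) -> a 0%nat <= Series a <= c / (1 - r).
Proof.
  intros Hr Ha.
  assert (Hgeo : ex_series (fun n => c * r ^ n)).
  { apply (ex_series_scal_l c (fun n => r ^ n)), ex_series_geom. rewrite Rabs_pos_eq; lra. }
  assert (Hex : ex_series a).
  { apply ex_series_Rabs.
    apply (@ex_series_le R_AbsRing R_CompleteNormedModule _ (fun n => c * r ^ n)); [|exact Hgeo].
    intros n. specialize (Ha n). unfold norm; simpl; unfold abs; simpl.
    rewrite Rabs_Rabsolu, Rabs_pos_eq; lra. }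
  split.
  - rewrite Series_incr_1 by exact Hex.
    enough (0 <= Series (fun n => a (S n))) by (specialize (Ha 0%nat); lra).
    assert (Hz : Series (fun _ : nat => 0) = 0).
    { rewrite (Series_ext _ (fun _ => 0 * 0)) by (intros; ring). rewrite Series_scal_l. ring. }
    rewrite <- Hz. apply Series_le; [intros n; specialize (Ha (S n)); lra|].
    now apply (ex_series_incr_1 a).
  - apply Rle_trans with (Series (fun n => c * r ^ n)); [now apply Series_le|].
    rewrite Series_scal_l.
    replace (Series (pow r)) with (/ (1 - r))
      by (symmetry; apply is_series_unique, is_series_geom; rewrite Rabs_pos_eq; lra).
    right. field. lra.
Qed.

Lemma sum_f_R0_even_odd (F : nat -> R) (m : nat) :
  sum_f_R0 F (2 * m + 2) =
  sum_f_R0 (fun j => F (2 * j)%nat) (S m) + sum_f_R0 (fun j => F (2 * j + 1)%nat) m.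
Proof.
  induction m as [|m IH]; [simpl; ring|].
  replace (2 * S m + 2)%nat with (S (S (2 * m + 2))) by lia.
  rewrite !tech5, IH, tech5.
  replace (S (S (2 * m + 2))) with (2 * S (S m))%nat by lia.
  replace (S (2 * m + 2)) with (2 * S m + 1)%nat by lia. ring.
Qed.

Lemma sumR_nonneg (F : nat -> R) (n : nat) : (forall j, 0 <= F j) -> 0 <= sumR F n.
Proof. intros H. induction n as [|n IH]; simpl; [lra|]. specialize (H n). lra. Qed.

Lemma PI2_lt_8_5 : PI / 2 < 8 / 5.
Proof.
  destruct (Rlt_or_le (PI / 2) (8 / 5)) as [H|H]; [exact H | exfalso].
  assert (Hc : 0 <= cos (8 / 5)) by (apply cos_ge_0; pose proof PI_RGT_0; lra).
  destruct (pre_cos_bound (8 / 5) 0 ltac:(lra) ltac:(lra)) as [_ Hb].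
  unfold cos_approx, cos_term in Hb. simpl in Hb. lra.
Qed.

Lemma INR_fact_S (n : nat) : INR (fact (S n)) = INR (S n) * INR (fact n).
Proof. now rewrite fact_simpl, mult_INR. Qed.

(* Taylor bounds of orders 7 and 8 leave a positive polynomial in [x^2]. *)
Lemma tan_gt_pade (x : R) : 0 < x < PI / 2 -> x / (1 - x ^ 2 / 3) < tan x.
Proof.
  intros Hx. pose proof PI_4. pose proof PI2_lt_8_5.
  destruct (sin_bound x 1 ltac:(lra) ltac:(lra)) as [Hs _].
  destruct (cos_bound x 1 ltac:(lra) ltac:(lra)) as [_ Hc].
  unfold sin_approx, cos_approx in *. simpl sum_f_R0 in *.
  unfold sin_term, cos_term in *.
  simpl Nat.mul in *. simpl Nat.add in *.
  rewrite !INR_fact_S in *. simpl fact in *. simpl INR in *.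
  assert (Hy : 0 < x ^ 2 < 64 / 25) by (simpl; nra).
  assert (Hpoly : (3 - x ^ 2) * (x - x ^ 3 / 6 + x ^ 5 / 120 - x ^ 7 / 5040)
                  - 3 * x * (1 - x ^ 2 / 2 + x ^ 4 / 24 - x ^ 6 / 720 + x ^ 8 / 40320)
                  = x * (x ^ 2) ^ 2 * (1 / 15 - x ^ 2 / 210 + (1 / 5040 - 1 / 13440) * (x ^ 2) ^ 2))
    by field.
  assert (0 < x * (x ^ 2) ^ 2 * (1 / 15 - x ^ 2 / 210 + (1 / 5040 - 1 / 13440) * (x ^ 2) ^ 2)).
  { apply Rmult_lt_0_compat; [apply Rmult_lt_0_compat; [lra | apply pow_lt; lra]|].
    pose proof (pow2_ge_0 (x ^ 2)). lra. }
  assert (Hs' : x - x ^ 3 / 6 + x ^ 5 / 120 - x ^ 7 / 5040 <= sin x)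
    by (eapply Rle_trans; [|exact Hs]; right; field).
  assert (Hc' : cos x <= 1 - x ^ 2 / 2 + x ^ 4 / 24 - x ^ 6 / 720 + x ^ 8 / 40320)
    by (eapply Rle_trans; [exact Hc|]; right; field).
  assert (H3 : 3 * x * cos x < (3 - x ^ 2) * sin x) by nra.
  assert (Hcos : 0 < cos x) by (apply cos_gt_0; lra).
  unfold tan. apply Rmult_lt_reg_r with (cos x * (1 - x ^ 2 / 3)); [nra|].
  field_simplify; [|lra|lra]. simpl in *. lra.
Qed.

Lemma cos_ge_1_sub_sq_div_2 (x : R) : 0 <= x <= 1 -> 1 - x ^ 2 / 2 <= cos x.
Proof.
  intros Hx. pose proof PI2_3_2.
  destruct (cos_bound x 0 ltac:(lra) ltac:(lra)) as [Hc _].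
  unfold cos_approx, cos_term in Hc. simpl in Hc. simpl. lra.
Qed.

Lemma tan_le_near_0 (x : R) : 0 < x <= 1 -> tan x * (1 - x ^ 2 / 2) <= x.
Proof.
  intros Hx. pose proof (sin_lt_x x ltac:(lra)). pose proof (cos_ge_1_sub_sq_div_2 x ltac:(lra)).
  assert (0 < 1 - x ^ 2 / 2) by (simpl; nra).
  assert (Hs : 0 < sin x) by (apply sin_gt_0; pose proof PI2_3_2; lra).
  unfold tan. apply Rmult_le_reg_l with (cos x); [lra|].
  field_simplify; [nra | lra].
Qed.

Lemma tan_unbounded (M : R) : 0 < M -> exists x, 1 <= x < PI / 2 /\ M <= tan x.
Proof.
  intros HM. pose proof PI2_3_2.
  set (d := Rmin (1 / 4) (1 / (2 * M))).
  assert (Hd1 : d <= 1 / 4) by apply Rmin_l.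
  assert (Hd2 : d <= 1 / (2 * M)) by apply Rmin_r.
  assert (Hd0 : 0 < d) by (apply Rmin_glb_lt; [lra | apply Rdiv_lt_0_compat; lra]).
  exists (PI / 2 - d). split; [lra|].
  unfold tan. rewrite sin_shift, cos_shift.
  pose proof (sin_lt_x d Hd0). pose proof (cos_ge_1_sub_sq_div_2 d ltac:(lra)).
  assert (Hs : 0 < sin d) by (apply sin_gt_0; lra).
  assert (d * (2 * M) <= 1).
  { apply Rmult_le_reg_r with (/ (2 * M)); [apply Rinv_0_lt_compat; lra|].
    rewrite Rmult_assoc, Rinv_r, Rmult_1_r by lra. unfold Rdiv in Hd2. lra. }
  apply Rmult_le_reg_r with (sin d); [lra|].
  unfold Rdiv. rewrite Rmult_assoc, Rinv_l, Rmult_1_r by lra.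
  simpl in *. nra.
Qed.

(* Coefficientwise form of [G(0) = 1] and [2 y G' = G - G^2 - y]; [PS_id] is the series of [y]. *)
Definition cot_recursion (g : nat -> R) : Prop :=
  g 0%nat = 1 /\ forall m, INR (2 * m) * g m - g m + PS_mult g g m + PS_id m = 0.

Section CotRecursion.

Variable g : nat -> R.
Hypothesis Hg : cot_recursion g.

Lemma cot_rec_1 : g 1%nat = - 1 / 3.
Proof.
  destruct Hg as [H0 H]. specialize (H 1%nat). unfold PS_mult in H. simpl in H.
  rewrite H0 in H. unfold PS_id in H; simpl in H. lra.
Qed.

Lemma cot_rec_conv (m : nat) : (2 <= m)%nat ->
  (2 * INR m + 1) * (- g m) = sum_f_R0 (fun k => (- g (S k)) * (- g (m - S k)%nat)) (m - 2).
Proof.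
  intros Hm. destruct Hg as [H0 H]. specialize (H m).
  assert (Hconv : PS_mult g g m = 2 * g m + sum_f_R0 (fun k => g (S k) * g (m - S k)%nat) (m - 2)).
  { unfold PS_mult. rewrite decomp_sum by lia.
    replace (Init.Nat.pred m) with (S (m - 2)) by lia.
    rewrite tech5. replace (S (S (m - 2))) with m by lia.
    rewrite Nat.sub_0_r, Nat.sub_diag, H0. ring. }
  assert (Hid : PS_id m = 0) by (destruct m as [|[|m]]; [lia | lia | reflexivity]).
  rewrite Hconv, Hid, mult_INR in H. simpl INR in H.
  rewrite (sum_eq _ (fun k => g (S k) * g (m - S k)%nat)) by (intros; ring).
  lra.
Qed.

Lemma cot_rec_step (m : nat) : (2 <= m)%nat ->
  (forall k, (1 <= k <= m)%nat -> 0 < - g k) ->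
  (forall k, (1 <= k < m)%nat -> - g (S k) <= - g k / 6) ->
  0 < - g (S m) /\ - g (S m) <= - g m / 6.
Proof.
  intros Hm Hpos Hrat.
  pose proof (cot_rec_conv (S m) ltac:(lia)) as Rm1.
  pose proof (cot_rec_conv m Hm) as Rm.
  rewrite decomp_sum in Rm1 by lia.
  replace (Init.Nat.pred (S m - 2)) with (m - 2)%nat in Rm1 by lia.
  replace (S m - 1)%nat with m in Rm1 by lia.
  rewrite S_INR, cot_rec_1 in Rm1.
  set (s := sum_f_R0 (fun i => - g (S (S i)) * - g (S m - S (S i))%nat) (m - 2)) in Rm1.
  set (s0 := sum_f_R0 (fun k => - g (S k) * - g (m - S k)%nat) (m - 2)) in Rm.
  assert (Hs : s <= s0 / 6).
  { unfold s, s0, Rdiv. rewrite Rmult_comm, scal_sum. apply sum_Rle.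
    intros i Hi. replace (S m - S (S i))%nat with (m - S i)%nat by lia.
    assert (0 < - g (m - S i)%nat) by (apply Hpos; lia).
    assert (- g (S (S i)) <= - g (S i) / 6) by (apply Hrat; lia).
    nra. }
  assert (Hs0 : 0 <= s).
  { unfold s. rewrite <- (sum_eq_R0 (fun _ => 0) (m - 2)) by auto.
    apply sum_Rle. intros i Hi.
    replace (S m - S (S i))%nat with (m - S i)%nat by lia.
    assert (0 < - g (m - S i)%nat) by (apply Hpos; lia).
    assert (0 < - g (S (S i))) by (apply Hpos; lia).
    nra. }
  assert (Ham : 0 < - g m) by (apply Hpos; lia).
  assert (HM : 0 < INR m) by (apply lt_0_INR; lia).
  split.
  - apply Rmult_lt_reg_l with (2 * (INR m + 1) + 1); [lra|]. nra.
  - apply Rmult_le_reg_l with (2 * (INR m + 1) + 1); [lra|]. nra.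
Qed.

Lemma cot_rec_decay (m : nat) : (1 <= m)%nat ->
  (forall k, (1 <= k <= m)%nat -> 0 < - g k) /\
  (forall k, (1 <= k < m)%nat -> - g (S k) <= - g k / 6).
Proof.
  pose proof cot_rec_1 as Hg1.
  induction m as [|m IH]; intros Hm; [lia|].
  destruct (Nat.eq_dec m 0) as [->|Hm0].
  { split; intros k Hk; [replace k with 1%nat by lia; lra | lia]. }
  destruct (IH ltac:(lia)) as [Hpos Hrat].
  assert (Key : 0 < - g (S m) /\ - g (S m) <= - g m / 6).
  { destruct (Nat.eq_dec m 1) as [->|Hm1].
    - pose proof (cot_rec_conv 2 ltac:(lia)) as R2. simpl in R2. rewrite Hg1 in R2 |- *.
      replace (2 * INR 2 + 1) with 5 in R2 by (simpl; ring). lra.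
    - apply cot_rec_step; auto. lia. }
  split.
  - intros k Hk. destruct (Nat.eq_dec k (S m)) as [->|Hk']; [tauto | apply Hpos; lia].
  - intros k Hk. destruct (Nat.eq_dec k m) as [->|Hk']; [tauto | apply Hrat; lia].
Qed.

Lemma cot_rec_neg_pos (k : nat) : (1 <= k)%nat -> 0 < - g k.
Proof. intros Hk. apply (cot_rec_decay k Hk). lia. Qed.

Lemma cot_rec_ratio (k : nat) : (1 <= k)%nat -> - g (S k) <= - g k / 6.
Proof. intros Hk. apply (cot_rec_decay (S k) ltac:(lia)). lia. Qed.

Lemma cot_rec_tail_bound (k : nat) : - g (S k) * 6 ^ k <= / 3.
Proof.
  induction k as [|k IH].
  - rewrite cot_rec_1. simpl. lra.
  - pose proof (cot_rec_ratio (S k) ltac:(lia)). pose proof (pow_lt 6 k ltac:(lra)).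
    simpl in *. nra.
Qed.

Lemma CV_radius_cot_rec (y : R) : Rabs y < 6 -> Rbar_lt (Rabs y) (CV_radius g).
Proof.
  apply (CV_radius_gt_of_geom_bound g 2); [lra|]. intros [|k].
  - rewrite (proj1 Hg), Rabs_R1. simpl. lra.
  - rewrite Rabs_left by (pose proof (cot_rec_neg_pos (S k) ltac:(lia)); lra).
    pose proof (cot_rec_tail_bound k). simpl. lra.
Qed.

Lemma cot_rec_ode (y : R) : Rabs y < 6 ->
  2 * y * PSeries (PS_derive g) y = PSeries g y - PSeries g y ^ 2 - y.
Proof.
  intros Hy. assert (Hr := CV_radius_cot_rec y Hy).
  assert (Hc : forall n, PS_scal 2 (PS_xderive g) n = PS_minus (PS_minus g (PS_mult g g)) PS_id n).
  { intros n. destruct Hg as [_ H]. specialize (H n).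
    unfold PS_scal, PS_minus, PS_xderive, scal, plus, opp; simpl. unfold mult, plus, opp; simpl.
    rewrite mult_INR in H. simpl INR in H. lra. }
  pose proof (PSeries_ext _ _ y Hc) as E.
  rewrite PSeries_scal, PSeries_xderive in E.
  rewrite PSeries_minus in E.
  2: { apply ex_pseries_minus; [apply CV_radius_inside; auto | apply ex_pseries_mult; auto]. }
  2: apply ex_pseries_id.
  rewrite PSeries_minus in E; [| apply CV_radius_inside; auto | apply ex_pseries_mult; auto].
  rewrite PSeries_mult, PSeries_id in E by auto.
  rewrite Rmult_assoc, E. ring.
Qed.

Lemma cot_rec_PSeries_bounds (y : R) : 0 <= y <= 4 -> 1 - y <= PSeries g y <= 1.
Proof.
  intros Hy.
  assert (Hex : ex_pseries g y) by (apply CV_radius_inside, CV_radius_cot_rec; rewrite Rabs_pos_eq; lra).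
  assert (E : PSeries g y = 1 - y * PSeries (fun k => - g (S k)) y).
  { rewrite PSeries_decr_1, (proj1 Hg) by exact Hex.
    rewrite (PSeries_ext (fun k => - g (S k)) (PS_opp (PS_decr_1 g))) by reflexivity.
    rewrite PSeries_opp. unfold PS_decr_1. ring. }
  assert (Hterm : forall n, 0 <= y ^ n * - g (S n) <= / 3 * (y / 6) ^ n).
  { intros n.
    pose proof (cot_rec_neg_pos (S n) ltac:(lia)). pose proof (cot_rec_tail_bound n).
    pose proof (pow_le y n ltac:(lra)). pose proof (pow_lt 6 n ltac:(lra)).
    unfold Rdiv. rewrite Rpow_mult_distr, pow_inv.
    split; [nra|]. apply Rmult_le_reg_r with (6 ^ n); [lra|].
    replace (/ 3 * (y ^ n * / 6 ^ n) * 6 ^ n) with (/ 3 * y ^ n) by (field; lra). nra. }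
  destruct (Series_geom_bounds _ (/ 3) (y / 6) ltac:(lra) Hterm) as [Hlo Hhi].
  specialize (Hterm 0%nat).
  assert (EP : PSeries (fun k => - g (S k)) y = Series (fun n => y ^ n * - g (S n))).
  { apply Series_ext. intros n. apply Rmult_comm. }
  rewrite <- EP in Hlo, Hhi. simpl in Hterm.
  set (T := PSeries (fun k => - g (S k)) y) in *.
  assert (Hc : / 3 / (1 - y / 6) <= 1).
  { apply Rmult_le_reg_r with (1 - y / 6); [lra|]. field_simplify; lra. }
  rewrite E. split; nra.
Qed.

Definition cot_defect (x : R) : R := PSeries g (x ^ 2) * sin x - x * cos x.

Definition cot_defect_deriv (x : R) : R :=
  2 * x * PSeries (PS_derive g) (x ^ 2) * sin x + (PSeries g (x ^ 2) - 1) * cos x + x * sin x.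

Lemma is_derive_cot_defect (x : R) : Rabs x < 2 -> is_derive cot_defect x (cot_defect_deriv x).
Proof.
  intros Hx.
  assert (Hx2 : Rabs (x * (x * 1)) < 6).
  { rewrite Rmult_1_r, Rabs_mult. pose proof (Rabs_pos x). nra. }
  unfold cot_defect. auto_derive.
  - apply ex_derive_PSeries, CV_radius_cot_rec, Hx2.
  - rewrite Derive_PSeries by apply CV_radius_cot_rec, Hx2.
    unfold cot_defect_deriv. simpl. ring.
Qed.

Lemma cot_defect_ode (x : R) : Rabs x < 2 ->
  x * cot_defect_deriv x = (1 - PSeries g (x ^ 2)) * cot_defect x.
Proof.
  intros Hx.
  assert (Hx2 : Rabs (x ^ 2) < 6).
  { rewrite <- RPow_abs. pose proof (Rabs_pos x). simpl. nra. }
  pose proof (cot_rec_ode _ Hx2) as Ho.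
  unfold cot_defect_deriv, cot_defect.
  transitivity (2 * x ^ 2 * PSeries (PS_derive g) (x ^ 2) * sin x
                + x * (PSeries g (x ^ 2) - 1) * cos x + x ^ 2 * sin x); [ring|].
  rewrite Ho. ring.
Qed.

(* [cot_defect] solves the linear equation [x W' = (1 - G(x^2)) W] with [W(0) = 0]; since
   [1 - G(x^2) <= x^2 <= 2 x], the energy [W^2 e^(-4x)] is nonincreasing, hence zero. *)
Lemma cot_rec_cot (x : R) : 0 < x < PI / 2 -> PSeries g (x ^ 2) * sin x = x * cos x.
Proof.
  intros Hx. assert (Hpi := PI_4).
  set (V := fun c => cot_defect c ^ 2 * exp (-4 * c)).
  set (Vd := fun c => (2 * cot_defect c * cot_defect_deriv c - 4 * cot_defect c ^ 2) * exp (-4 * c)).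
  assert (HD : forall c, 0 <= c <= x -> derivable_pt_lim V c (Vd c)).
  { intros c Hc. apply is_derive_Reals.
    assert (D := is_derive_cot_defect c ltac:(rewrite Rabs_pos_eq; lra)).
    unfold V. auto_derive.
    - now exists (cot_defect_deriv c).
    - replace (Derive (fun y => cot_defect y) c) with (cot_defect_deriv c)
        by (symmetry; now apply is_derive_unique).
      unfold Vd. ring. }
  destruct (MVT_cor2 V Vd 0 x ltac:(lra) HD) as [c [Hmvt Hc]].
  assert (HV0 : V 0 = 0) by (unfold V, cot_defect; rewrite sin_0; simpl; ring).
  assert (HVd : c * Vd c <= 0).
  { assert (Hc2 : Rabs c < 2) by (rewrite Rabs_pos_eq; lra).
    destruct (cot_rec_PSeries_bounds (c ^ 2) ltac:(simpl; split; nra)) as [Hlo _].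
    assert (E : c * Vd c = 2 * cot_defect c ^ 2 * (1 - PSeries g (c ^ 2) - 2 * c) * exp (-4 * c)).
    { unfold Vd. transitivity ((2 * cot_defect c * (c * cot_defect_deriv c)
                                - 4 * c * cot_defect c ^ 2) * exp (-4 * c)); [ring|].
      rewrite cot_defect_ode by exact Hc2. ring. }
    rewrite E. pose proof (pow2_ge_0 (cot_defect c)). pose proof (exp_pos (-4 * c)).
    assert (1 - PSeries g (c ^ 2) - 2 * c <= 0) by (simpl in *; nra).
    apply Rmult_le_0_r; [|lra]. nra. }
  assert (HVx : V x = 0).
  { assert (0 <= V x) by (unfold V; pose proof (exp_pos (-4 * x));
      pose proof (pow2_ge_0 (cot_defect x)); nra).
    assert (Vd c <= 0) by (apply Rmult_le_reg_l with c; lra).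
    nra. }
  unfold V in HVx. pose proof (exp_pos (-4 * x)).
  apply Rmult_integral in HVx as [E|E]; [|lra].
  assert (E0 : cot_defect x = 0) by (simpl in E; nra).
  unfold cot_defect in E0. lra.
Qed.

Lemma middle_eq_cot (x : R) : 0 < x < PI / 2 ->
  middle x = x ^ 2 + PSeries g (x ^ 2) ^ 2 + PSeries g (x ^ 2).
Proof.
  intros Hx. pose proof PI2_3_2.
  assert (Hs : 0 < sin x) by (apply sin_gt_0; lra).
  assert (Hc : 0 < cos x) by (apply cos_gt_0; lra).
  assert (Hh : PSeries g (x ^ 2) = x * cos x / sin x)
    by (rewrite <- (cot_rec_cot x Hx); field; lra).
  assert (Hsq : (x / sin x) ^ 2 = x ^ 2 + (x * cos x / sin x) ^ 2).
  { pose proof (sin2_cos2 x) as E. unfold Rsqr in E.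
    rewrite <- (Rmult_1_r ((x / sin x) ^ 2)), <- E. field. lra. }
  unfold middle, tan. rewrite Hh, Hsq. field. lra.
Qed.

Definition middle_coef (k : nat) : R := 2 * g k - 2 * PS_xderive g k.

Lemma middle_coef_eq (k : nat) : middle_coef k = PS_minus (PS_scal 2 g) (PS_scal 2 (PS_xderive g)) k.
Proof.
  unfold middle_coef, PS_minus, PS_scal, scal, plus, opp; simpl. unfold mult, plus, opp; simpl. ring.
Qed.

Lemma ex_pseries_middle_coef (y : R) : Rabs y < 6 -> ex_pseries middle_coef y.
Proof.
  intros Hy. assert (Hr := CV_radius_cot_rec y Hy).
  eapply ex_pseries_ext; [intros n; symmetry; apply middle_coef_eq|].
  apply ex_pseries_minus; apply ex_pseries_scal; try apply Rmult_comm.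
  - now apply CV_radius_inside.
  - now apply ex_pseries_xderive.
Qed.

Lemma PSeries_middle_coef (y : R) : Rabs y < 6 ->
  PSeries middle_coef y = y + PSeries g y + PSeries g y ^ 2.
Proof.
  intros Hy. assert (Hr := CV_radius_cot_rec y Hy).
  rewrite (PSeries_ext _ _ y middle_coef_eq), PSeries_minus.
  - rewrite !PSeries_scal, PSeries_xderive, <- Rmult_assoc, cot_rec_ode by exact Hy. ring.
  - apply ex_pseries_scal; [apply Rmult_comm | now apply CV_radius_inside].
  - apply ex_pseries_scal; [apply Rmult_comm | now apply ex_pseries_xderive].
Qed.

Lemma middle_eq_PSeries (x : R) : 0 < x < PI / 2 -> middle x = PSeries middle_coef (x ^ 2).
Proof.
  intros Hx. pose proof PI2_lt_8_5.
  rewrite middle_eq_cot, PSeries_middle_coef by (auto; rewrite Rabs_pos_eq; simpl; nra). ring.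
Qed.

Lemma middle_lt_5 (x : R) : 0 < x < PI / 2 -> middle x < 5.
Proof.
  intros Hx. pose proof PI2_lt_8_5.
  assert (Hx2 : 0 <= x ^ 2 < 64 / 25) by (simpl; nra).
  destruct (cot_rec_PSeries_bounds (x ^ 2) ltac:(lra)) as [Hlo Hhi].
  rewrite middle_eq_cot by exact Hx. nra.
Qed.

Lemma middle_coef_pos (k : nat) : (2 <= k)%nat -> 0 < middle_coef k.
Proof.
  intros Hk. unfold middle_coef, PS_xderive. pose proof (cot_rec_neg_pos k ltac:(lia)).
  assert (2 <= INR k) by (replace 2 with (INR 2) by (simpl; ring); apply le_INR; lia).
  nra.
Qed.

Lemma middle_coef_ratio (k : nat) : (2 <= k)%nat -> middle_coef (S k) <= middle_coef k / 3.
Proof.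
  intros Hk. unfold middle_coef, PS_xderive. pose proof (cot_rec_neg_pos k ltac:(lia)).
  pose proof (cot_rec_ratio k ltac:(lia)).
  assert (2 <= INR k) by (replace 2 with (INR 2) by (simpl; ring); apply le_INR; lia).
  rewrite S_INR. nra.
Qed.

Lemma PSeries_middle_tail_bounds (n : nat) (y : R) : (2 <= n)%nat -> 0 <= y < 3 ->
  middle_coef n <= PSeries (PS_decr_n middle_coef n) y <= middle_coef n / (1 - y / 3).
Proof.
  intros Hn Hy.
  assert (Hgeom : forall j, middle_coef (n + j) <= middle_coef n * (/ 3) ^ j).
  { induction j as [|j IH]; [rewrite Nat.add_0_r; simpl; lra|].
    replace (n + S j)%nat with (S (n + j)) by lia.
    pose proof (middle_coef_ratio (n + j) ltac:(lia)). simpl. lra. }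
  assert (Hterm : forall j, 0 <= y ^ j * middle_coef (n + j) <= middle_coef n * (y / 3) ^ j).
  { intros j. pose proof (middle_coef_pos (n + j) ltac:(lia)). specialize (Hgeom j).
    pose proof (pow_le y j ltac:(lra)).
    unfold Rdiv. rewrite Rpow_mult_distr. split; [nra|]. nra. }
  destruct (Series_geom_bounds _ (middle_coef n) (y / 3) ltac:(lra) Hterm) as [Hlo Hhi].
  rewrite Nat.add_0_r in Hlo. simpl in Hlo.
  assert (E : PSeries (PS_decr_n middle_coef n) y = Series (fun j => y ^ j * middle_coef (n + j))).
  { apply Series_ext. intros j. apply Rmult_comm. }
  rewrite E. lra.
Qed.
End CotRecursion.

Lemma exp_sub_1_neq_0 (t : R) : t <> 0 -> exp t - 1 <> 0.
Proof.
  intros Ht. destruct (Rtotal_order t 0) as [H|[H|H]]; [|easy|].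
  - pose proof (exp_increasing t 0 H). rewrite exp_0 in *. lra.
  - pose proof (exp_ineq1 t Ht). lra.
Qed.

Lemma x_div_expm1_near_1 (t : R) : 0 < t < 1 -> Rabs (t / (exp t - 1) - 1) <= t.
Proof.
  intros Ht.
  pose proof (exp_ineq1 t ltac:(lra)) as Hup.
  pose proof (exp_ineq1 (- t) ltac:(lra)) as Hlow. rewrite exp_Ropp in Hlow.
  pose proof (exp_pos t) as Hp.
  assert (Hd : 0 < exp t - 1) by lra.
  assert (Hprod : exp t * (1 - t) < 1).
  { apply Rmult_lt_reg_r with (/ exp t); [now apply Rinv_0_lt_compat|].
    rewrite Rmult_comm, <- Rmult_assoc, Rinv_l by lra. lra. }
  assert (Hf : 1 - t <= t / (exp t - 1) <= 1).
  { split; apply Rmult_le_reg_r with (exp t - 1); auto;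
      unfold Rdiv; rewrite Rmult_assoc, Rinv_l by lra; nra. }
  apply Rabs_le. lra.
Qed.

Definition bern (B : nat -> R) (n : nat) : R := B n / INR (fact n).

Section Bernoulli.

Variable B : nat -> R.
Hypothesis HB : is_Bernoulli B.

Lemma is_pseries_bern (t : R) :
  0 < Rabs t < 2 * PI -> is_pseries (bern B) t (t / (exp t - 1)).
Proof.
  intros Ht. pose proof (HB t Ht) as Hsum. apply is_series_Reals in Hsum.
  eapply is_series_ext; [|exact Hsum].
  intros n. rewrite pow_n_pow.
  change (B n * t ^ n / INR (fact n) = t ^ n * bern B n).
  unfold bern. field. apply INR_fact_neq_0.
Qed.

Lemma CV_radius_bern (t : R) : Rabs t < 2 * PI -> Rbar_lt (Rabs t) (CV_radius (bern B)).
Proof.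
  apply CV_radius_gt_of_ex_pseries. intros x Hx. eexists. apply is_pseries_bern.
  rewrite Rabs_pos_eq; lra.
Qed.

Lemma ex_pseries_bern (t : R) : Rabs t < 2 * PI -> ex_pseries (bern B) t.
Proof. intros Ht. now apply CV_radius_inside, CV_radius_bern. Qed.

Lemma PSeries_bern (t : R) :
  0 < Rabs t < 2 * PI -> PSeries (bern B) t = t / (exp t - 1).
Proof. intros Ht. now apply is_pseries_unique, is_pseries_bern. Qed.

Lemma bern_0 : bern B 0 = 1.
Proof.
  assert (Hpi := PI2_3_2).
  apply (PSeries_coef_0_of_bound _ (fun t => t / (exp t - 1)) 1).
  - lra.
  - rewrite <- Rabs_R0. apply CV_radius_bern. rewrite Rabs_R0. lra.
  - intros t Ht. apply PSeries_bern. rewrite Rabs_pos_eq; lra.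
  - exact x_div_expm1_near_1.
Qed.

(* Coefficientwise form of [f(-t) = f(t) + t] for [f(t) = t / (e^t - 1)]. *)
Lemma bern_reflect (n : nat) : (-1) ^ n * bern B n = bern B n + PS_id n.
Proof.
  assert (Hpi := PI_RGT_0).
  set (alt := fun n => (-1) ^ n * bern B n).
  assert (Halt : forall x, Rabs x < 2 * PI -> ex_pseries alt x).
  { intros x Hx. apply ex_pseries_alt, ex_pseries_bern. now rewrite Rabs_Ropp. }
  assert (Hdiff : forall x, Rabs x < 2 * PI -> ex_pseries (PS_minus alt (bern B)) x).
  { intros x Hx. apply ex_pseries_minus; [apply Halt | apply ex_pseries_bern]; exact Hx. }
  enough (K : forall n, PS_minus (PS_minus alt (bern B)) PS_id n = 0).
  { specialize (K n). unfold PS_minus, plus, opp in K; simpl in K. unfold plus in K; simpl in K.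
    unfold alt in K. lra. }
  apply (PSeries_coef_eq_0 _ (2 * PI)); [lra| |].
  - intros x Hx. apply ex_pseries_minus; [apply Hdiff, Hx | apply ex_pseries_id].
  - intros t Ht.
    rewrite (PSeries_minus _ _ t (Hdiff t ltac:(lra)) (ex_pseries_id t)).
    rewrite (PSeries_minus _ _ t (Halt t ltac:(lra)) (ex_pseries_bern t ltac:(lra))).
    unfold alt. rewrite PSeries_alt, PSeries_id.
    rewrite !PSeries_bern by (rewrite ?Rabs_Ropp; exact Ht).
    assert (Ht0 : t <> 0) by (intros ->; rewrite Rabs_R0 in Ht; lra).
    pose proof (exp_sub_1_neq_0 t Ht0) as E1.
    pose proof (exp_sub_1_neq_0 (- t) ltac:(lra)) as E2.
    rewrite exp_Ropp in E2 |- *. pose proof (exp_pos t).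
    field_simplify; [unfold Rdiv; ring | repeat split; lra].
Qed.

Lemma bern_odd (j : nat) : bern B (2 * j + 1) = match j with O => - 1 / 2 | _ => 0 end.
Proof.
  pose proof (bern_reflect (2 * j + 1)) as H.
  replace (2 * j + 1)%nat with (S (2 * j)) in * by lia.
  rewrite pow_1_odd in H. unfold PS_id in H. simpl PS_incr_1 in H.
  destruct j as [|j]; simpl in H |- *; lra.
Qed.

Lemma PSeries_derive_bern (t : R) : 0 < Rabs t < 2 * PI ->
  PSeries (PS_derive (bern B)) t = (exp t - 1 - t * exp t) / (exp t - 1) ^ 2.
Proof.
  intros Ht.
  assert (Ht0 : t <> 0) by (intros ->; rewrite Rabs_R0 in Ht; lra).
  assert (Hloc : locally t (fun s => PSeries (bern B) s = s / (exp s - 1))).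
  { assert (Hd : 0 < Rmin (Rabs t) (2 * PI - Rabs t)) by (apply Rmin_glb_lt; lra).
    exists (mkposreal _ Hd). intros s Hs.
    unfold ball in Hs; simpl in Hs. unfold AbsRing_ball, abs, minus, plus, opp in Hs; simpl in Hs.
    pose proof (Rmin_l (Rabs t) (2 * PI - Rabs t)).
    pose proof (Rmin_r (Rabs t) (2 * PI - Rabs t)).
    pose proof (Rabs_triang_inv t s) as T1. pose proof (Rabs_triang_inv s t) as T2.
    replace (t - s) with (- (s + - t)) in T1 by ring. rewrite Rabs_Ropp in T1.
    replace (s - t) with (s + - t) in T2 by ring.
    apply PSeries_bern. split; lra. }
  pose proof (is_derive_ext_loc _ _ _ _ Hloc
                (is_derive_PSeries _ t (CV_radius_bern t ltac:(lra)))) as D.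
  apply is_derive_unique in D. rewrite <- D.
  apply is_derive_unique. pose proof (exp_sub_1_neq_0 t Ht0).
  auto_derive; [assumption | field; assumption].
Qed.

(* Coefficientwise form of [t f' = f - f^2 - t f] for [f(t) = t / (e^t - 1)]. *)
Lemma bern_ode (n : nat) :
  INR n * bern B n - bern B n + PS_mult (bern B) (bern B) n + PS_incr_1 (bern B) n = 0.
Proof.
  assert (Hpi := PI_RGT_0).
  set (b := bern B).
  assert (Hr : forall x, Rabs x < 2 * PI -> Rbar_lt (Rabs x) (CV_radius b)) by apply CV_radius_bern.
  assert (Hexs : forall x, Rabs x < 2 * PI ->
     ex_pseries (PS_minus (PS_xderive b) b) x /\ ex_pseries (PS_mult b b) x /\
     ex_pseries (PS_incr_1 b) x).
  { intros x Hx. split; [|split].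
    - apply ex_pseries_minus; [apply ex_pseries_xderive, Hr, Hx | apply ex_pseries_bern, Hx].
    - apply ex_pseries_mult; apply Hr, Hx.
    - apply ex_pseries_incr_1, ex_pseries_bern, Hx. }
  enough (K : forall n,
    PS_plus (PS_plus (PS_minus (PS_xderive b) b) (PS_mult b b)) (PS_incr_1 b) n = 0).
  { specialize (K n). unfold PS_plus, PS_minus, plus, opp in K; simpl in K.
    unfold plus in K; simpl in K. unfold PS_xderive in K. lra. }
  apply (PSeries_coef_eq_0 _ (2 * PI)); [lra| |].
  - intros x Hx. destruct (Hexs x Hx) as (H1 & H2 & H3).
    apply ex_pseries_plus; [apply ex_pseries_plus|]; auto.
  - intros t Ht.
    assert (Ht2 : Rabs t < 2 * PI) by lra.
    destruct (Hexs t Ht2) as (H1 & H2 & H3).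
    rewrite (PSeries_plus _ _ t (ex_pseries_plus _ _ t H1 H2) H3), (PSeries_plus _ _ t H1 H2).
    rewrite (PSeries_minus (PS_xderive b) b t (ex_pseries_xderive _ _ (Hr t Ht2)) (ex_pseries_bern t Ht2)).
    rewrite (PSeries_mult _ _ t (Hr t Ht2) (Hr t Ht2)).
    rewrite PSeries_incr_1, PSeries_xderive.
    unfold b. rewrite PSeries_derive_bern, PSeries_bern by exact Ht.
    assert (Ht0 : t <> 0) by (intros ->; rewrite Rabs_R0 in Ht; lra).
    pose proof (exp_sub_1_neq_0 t Ht0).
    field. assumption.
Qed.

Lemma bern_conv_odd (m : nat) :
  sum_f_R0 (fun j => bern B (2 * j + 1) * bern B (2 * m + 2 - (2 * j + 1))) m =
  match m with O => 1 / 4 | _ => 0 end.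
Proof.
  destruct m as [|m]; [simpl; pose proof (bern_odd 0) as H1; simpl in H1; rewrite H1; field|].
  apply sum_eq_R0. intros j Hj.
  replace (2 * S m + 2 - (2 * j + 1))%nat with (2 * (S m - j) + 1)%nat by lia.
  rewrite !bern_odd. destruct j as [|j]; [|ring].
  replace (S m - 0)%nat with (S m) by lia. ring.
Qed.

Definition cot_coef (j : nat) : R := (-4) ^ j * bern B (2 * j).

(* The even-index part of [bern_ode]; among odd indices only [bern B 1] is nonzero. *)
Lemma cot_recursion_cot_coef : cot_recursion cot_coef.
Proof.
  split; [unfold cot_coef; simpl; rewrite bern_0; ring|].
  intros [|m].
  - change (PS_id 0) with 0. unfold cot_coef, PS_mult. simpl. rewrite bern_0. ring.
  - pose proof (bern_ode (2 * m + 2)) as H.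
    unfold PS_mult in H. rewrite sum_f_R0_even_odd, bern_conv_odd in H.
    replace (PS_incr_1 (bern B) (2 * m + 2)) with (bern B (2 * m + 1))
      in H by (now replace (2 * m + 2)%nat with (S (2 * m + 1)) by lia).
    rewrite bern_odd in H.
    assert (Hev : PS_mult cot_coef cot_coef (S m) = (-4) ^ (S m) *
       sum_f_R0 (fun j => bern B (2 * j) * bern B (2 * m + 2 - 2 * j)) (S m)).
    { unfold PS_mult. rewrite scal_sum. apply sum_eq. intros i Hi. unfold cot_coef.
      replace (2 * m + 2 - 2 * i)%nat with (2 * (S m - i))%nat by lia.
      replace ((-4) ^ (S m)) with ((-4) ^ i * (-4) ^ (S m - i))
        by (rewrite <- pow_add; f_equal; lia).
      ring. }
    rewrite Hev. unfold cot_coef.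
    replace (2 * S m)%nat with (2 * m + 2)%nat by lia.
    rewrite plus_INR, mult_INR in H |- *. simpl INR in H |- *.
    destruct m as [|m]; unfold PS_id; simpl PS_incr_1.
    + simpl in H |- *. lra.
    + match type of H with ?L = 0 => transitivity ((-4) ^ S (S m) * L); [|rewrite H]; ring end.
Qed.

Lemma coef_eq_middle_coef (k : nat) : coef B k = middle_coef cot_coef (S k).
Proof.
  unfold coef, middle_coef, PS_xderive. rewrite S_INR.
  replace (2 * cot_coef (S k) - 2 * ((INR k + 1) * cot_coef (S k)))
    with (- 2 * INR k * cot_coef (S k)) by ring.
  destruct k as [|k]; [change (INR 0) with 0; unfold Rdiv; ring|].
  pose proof (cot_rec_neg_pos _ cot_recursion_cot_coef (S (S k)) ltac:(lia)) as Hp.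
  replace (- 2 * INR (S k) * cot_coef (S (S k))) with (2 * INR (S k) * Rabs (cot_coef (S (S k))))
    by (rewrite Rabs_left by lra; ring).
  unfold cot_coef, bern. rewrite Rabs_mult, Rabs_div, <- RPow_abs by apply INR_fact_neq_0.
  rewrite (Rabs_pos_eq (INR _)) by apply pos_INR.
  replace (Rabs (-4)) with (2 ^ 2) by (rewrite Rabs_left by lra; simpl; ring).
  rewrite <- pow_mult.
  replace (2 ^ (2 * S k + 3)) with (2 * 2 ^ (2 * S (S k)))
    by (now replace (2 * S k + 3)%nat with (S (2 * S (S k))) by lia).
  replace (2 * S (S k))%nat with (2 * S k + 2)%nat by lia.
  field. apply INR_fact_neq_0.
Qed.

Lemma coef_pos (k : nat) : (1 <= k)%nat -> 0 < coef B k.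
Proof.
  intros Hk. rewrite coef_eq_middle_coef.
  apply (middle_coef_pos _ cot_recursion_cot_coef). lia.
Qed.

Lemma sum_middle_coef (n : nat) (x : R) :
  sum_f_R0 (fun k => middle_coef cot_coef k * (x ^ 2) ^ k) (S n) =
  2 + sumR (fun j => coef B (S j) * x ^ (2 * S j + 2)) n.
Proof.
  induction n as [|n IH].
  - unfold middle_coef, PS_xderive, cot_coef. simpl. rewrite bern_0. simpl. ring.
  - rewrite tech5, IH. change (sumR ?F (S n)) with (sumR F n + F n). cbv beta.
    rewrite coef_eq_middle_coef, <- pow_mult.
    replace (2 * S (S n))%nat with (2 * S n + 2)%nat by lia. ring.
Qed.

Lemma approx8_shift (N : nat) (c x : R) :
  approx8 B N c x = approx8 B N 0 x + c * x ^ (2 * N + 1) * tan x.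
Proof. unfold approx8. ring. Qed.

Lemma middle_sub_approx8_bounds (N : nat) (x : R) : (1 <= N)%nat -> 0 < x < PI / 2 ->
  coef B N * x ^ (2 * N + 2) <= middle x - approx8 B N 0 x <=
  coef B N * x ^ (2 * N + 2) / (1 - x ^ 2 / 3).
Proof.
  intros HN Hx. pose proof PI2_lt_8_5.
  assert (Hx2 : 0 <= x ^ 2 < 3) by (simpl; nra).
  pose proof cot_recursion_cot_coef as Hg.
  rewrite (middle_eq_PSeries _ Hg x Hx).
  rewrite (PSeries_decr_n _ N) by (apply ex_pseries_middle_coef; auto; rewrite Rabs_pos_eq; lra).
  destruct N as [|n]; [lia|].
  unfold approx8. rewrite sum_middle_coef. replace (S n - 1)%nat with n by lia.
  rewrite <- pow_mult, coef_eq_middle_coef.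
  replace (2 * S (S n))%nat with (2 * S n + 2)%nat by lia.
  destruct (PSeries_middle_tail_bounds _ Hg (S (S n)) (x ^ 2) ltac:(lia) Hx2) as [Hlo Hhi].
  pose proof (pow_lt x (2 * S n + 2) ltac:(lra)).
  split; [nra|]. unfold Rdiv in *. ring_simplify. nra.
Qed.

Lemma middle_between_approx8 (N : nat) (x : R) : (1 <= N)%nat -> 0 < x < PI / 2 ->
  approx8 B N 0 x < middle x /\ middle x < approx8 B N (coef B N) x.
Proof.
  intros HN Hx. pose proof PI2_lt_8_5.
  destruct (middle_sub_approx8_bounds N x HN Hx) as [Hlo Hhi].
  pose proof (coef_pos N HN) as Hm. pose proof (tan_gt_pade x Hx) as Htan.
  pose proof (pow_lt x (2 * N + 1) ltac:(lra)) as Hp.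
  assert (Hy : 0 < 1 - x ^ 2 / 3) by (simpl; nra).
  replace (x ^ (2 * N + 2)) with (x ^ (2 * N + 1) * x) in Hlo, Hhi
    by (replace (2 * N + 2)%nat with (2 * N + 1 + 1)%nat by lia; rewrite (pow_add x (2 * N + 1) 1); ring).
  rewrite (approx8_shift N (coef B N) x). split.
  { enough (0 < coef B N * (x ^ (2 * N + 1) * x)) by lra.
    apply Rmult_lt_0_compat; [exact Hm | apply Rmult_lt_0_compat; lra]. }
  replace (coef B N * (x ^ (2 * N + 1) * x) / (1 - x ^ 2 / 3))
    with (coef B N * x ^ (2 * N + 1) * (x / (1 - x ^ 2 / 3))) in Hhi by (field; lra).
  assert (coef B N * x ^ (2 * N + 1) * (x / (1 - x ^ 2 / 3)) <
          coef B N * x ^ (2 * N + 1) * tan x)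
    by (apply Rmult_lt_compat_l; [nra | exact Htan]).
  lra.
Qed.

Lemma approx8_lower_optimal (N : nat) (p : R) : (1 <= N)%nat ->
  (forall x, 0 < x < PI / 2 -> approx8 B N p x < middle x) -> p <= 0.
Proof.
  intros HN Hp. destruct (Rle_or_lt p 0) as [|Hp0]; [assumption | exfalso].
  destruct (tan_unbounded (5 / p) ltac:(apply Rdiv_lt_0_compat; lra)) as [x [Hx Ht]].
  assert (Hx' : 0 < x < PI / 2) by lra.
  specialize (Hp x Hx'). pose proof (middle_lt_5 _ cot_recursion_cot_coef x Hx').
  rewrite (approx8_shift N p x) in Hp.
  assert (Hs : 2 <= approx8 B N 0 x).
  { unfold approx8. rewrite Rmult_0_l, Rmult_0_l, Rplus_0_r.
    enough (0 <= sumR (fun j => coef B (S j) * x ^ (2 * S j + 2)) (N - 1)) by lra.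
    apply sumR_nonneg. intros j.
    apply Rmult_le_pos; [left; apply coef_pos; lia | apply pow_le; lra]. }
  assert (Hpw : 1 <= x ^ (2 * N + 1)) by (apply pow_R1_Rle; lra).
  assert (5 <= p * tan x) by (apply Rmult_le_reg_r with (/ p);
    [now apply Rinv_0_lt_compat | field_simplify; lra]).
  nra.
Qed.

Lemma approx8_upper_optimal (N : nat) (q : R) : (1 <= N)%nat ->
  (forall x, 0 < x < PI / 2 -> middle x < approx8 B N q x) -> coef B N <= q.
Proof.
  intros HN Hq. set (m := coef B N). pose proof (coef_pos N HN) as Hm. fold m in Hm.
  destruct (Rle_or_lt m q) as [|Hqm]; [assumption | exfalso].
  pose proof PI2_3_2.
  assert (Hq1 : 0 < 1 - q / m).
  { enough (q / m < 1) by lra.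
    apply Rmult_lt_reg_r with m; [lra|]. unfold Rdiv. rewrite Rmult_assoc, Rinv_l; lra. }
  set (x := Rmin (1 / 2) (1 - q / m)).
  assert (Hx1 : x <= 1 / 2) by apply Rmin_l.
  assert (Hx2 : x <= 1 - q / m) by apply Rmin_r.
  assert (Hx0 : 0 < x) by (apply Rmin_glb_lt; lra).
  assert (Hx : 0 < x < PI / 2) by lra.
  specialize (Hq x Hx). rewrite (approx8_shift N q x) in Hq.
  destruct (middle_sub_approx8_bounds N x HN Hx) as [Hlo _]. fold m in Hlo.
  pose proof (pow_lt x (2 * N + 1) ltac:(lra)) as Hp.
  replace (x ^ (2 * N + 2)) with (x ^ (2 * N + 1) * x) in Hlo
    by (replace (2 * N + 2)%nat with (2 * N + 1 + 1)%nat by lia; rewrite (pow_add x (2 * N + 1) 1); ring).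
  assert (Hmx : m * x < q * tan x).
  { apply Rmult_lt_reg_l with (x ^ (2 * N + 1)); [exact Hp|]. nra. }
  assert (Htan : 0 < tan x).
  { unfold tan. apply Rdiv_lt_0_compat; [apply sin_gt_0 | apply cos_gt_0]; lra. }
  destruct (Rle_or_lt q 0) as [Hq0|Hq0]; [nra|].
  pose proof (tan_le_near_0 x ltac:(lra)) as Hts.
  assert (Hqm' : q <= m * (1 - x ^ 2 / 2)).
  { assert (Eq : q = m * (q / m)) by (field; lra).
    assert (x ^ 2 / 2 <= x) by (simpl; nra).
    rewrite Eq. apply Rmult_le_compat_l; lra. }
  nra.
Qed.
End Bernoulli.

Theorem theorem8 (B : nat -> R) (HB : is_Bernoulli B) (N : nat) (HN : (1 <= N)%nat) :
  (forall x : R, 0 < x < PI / 2 ->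
     approx8 B N 0 x < middle x /\ middle x < approx8 B N (coef B N) x)
  /\ (forall p : R, (forall x : R, 0 < x < PI / 2 -> approx8 B N p x < middle x) -> p <= 0)
  /\ (forall q : R, (forall x : R, 0 < x < PI / 2 -> middle x < approx8 B N q x) -> coef B N <= q).
Proof.
  split; [|split].
  - intros x Hx. exact (middle_between_approx8 B HB N x HN Hx).
  - intros p. exact (approx8_lower_optimal B HB N p HN).
  - intros q. exact (approx8_upper_optimal B HB N q HN).
Qed.
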